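(* Under the setting in the context (in particular $\hat\tau$ permutation-invariant), for every $j\in\mathcal U$ and $k\in\mathcal C$, $$\mathbb E\Big[\frac{\mathbf 1\{R_j>\mathcal Q_j,\ T_k\le\hat\tau,\ T_j\le\hat\tau\}}{\sum_{i\in\mathcal C\cup\{j\}}\mathbf 1\{T_i\le\hat\tau\}}\Big]=\mathbb E\Big[\frac{\mathbf 1\{R_k>\mathcal Q_j,\ T_k\le\hat\tau,\ T_j\le\hat\tau\}}{\sum_{i\in\mathcal C\cup\{j\}}\mathbf 1\{T_i\le\hat\tau\}}\Big],$$ where $\mathcal Q_j$ is the $\lceil(1-\alpha)(|\hat{\mathcal S}_c|+1)\rceil$-th smallest value of $\{R_i: i\in\hat{\mathcal S}_c\cup\{j\}\}$.
   Context: Setting: $\hat\mu,g:\mathbb R^d\to\mathbb R$ fixed deterministic measurable functions; calibration indices $\mathcal C$ ($|\mathcal C|=n$) and disjoint test indices $\mathcal U$ ($|\mathcal U|=m$); $(X_i,Y_i)$, $i\in\mathcal C\cup\mathcal U$, i.i.d.; $T_i=g(X_i)$, $R_i=|Y_i-\hat\mu(X_i)|$; $\alpha\in(0,1)$. The threshold is $\hat\tau=\tau(T_i:i\in\mathcal C\cup\mathcal U)$ for a deterministic measurable $\tau:\mathbb R^{n+m}\to\mathbb R$ invariant under permutations of its arguments, and $\hat{\mathcal S}_c=\{i\in\mathcal C:T_i\le\hat\tau\}$. The ratio inside the expectations is interpreted as $0$ when the indicator in the numerator is $0$. *)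

From HB Require Import structures.
From mathcomp Require Import all_boot all_order all_algebra all_fingroup.
From mathcomp Require Import all_classical all_reals all_analysis.
Set Implicit Arguments. Unset Strict Implicit. Unset Printing Implicit Defensive.
Import Order.TTheory GRing.Theory Num.Theory.
Local Open Scope classical_set_scope.
Local Open Scope ring_scope.

(* Data Z_i = (X_i, Y_i) in R^d x R, indexed by 'I_N (N = n + m). *)

Definition iid_family {dO : measure_display} {Omega : measurableType dO}
  {R : realType} {dT : measure_display} {T : measurableType dT} (N : nat)
  (P : probability Omega R) (Z : 'I_N -> Omega -> T) : Prop :=
  (forall i, measurable_fun [set: Omega] (Z i)) /\
  (forall i j (A : set T), measurable A ->
      P (Z i @^-1` A) = P (Z j @^-1` A)) /\
  (forall B : 'I_N -> set T, (forall i, measurable (B i)) ->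
      P (\bigcap_i (Z i @^-1` B i)) = (\prod_(i < N) P (Z i @^-1` B i))%E).

Definition perm_invariant {R : realType} (N : nat) (tau : N.-tuple R -> R) :=
  forall (s : 'S_N) (t : N.-tuple R), tau [tuple tnth t (s i) | i < N] = tau t.

(* k-th smallest (1-based) element of a finite list of reals *)
Definition kth_smallest {R : realType} (k : nat) (s : seq R) : R :=
  nth 0 (sort <=%R s) k.-1.

From HB Require Import structures.
From mathcomp Require Import all_boot all_order all_algebra all_fingroup.
From mathcomp Require Import all_classical all_reals all_analysis.
From mathcomp Require Import measurable_realfun.
Import Order.TTheory GRing.Theory Num.Theory.
Local Open Scope ring_scope.
Set Implicit Arguments. Unset Strict Implicit. Unset Printing Implicit Defensive.

(* Write the integrand as a deterministic function [excess_weight z j r k] of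
   the data vector z = (X_i, Y_i)_i, with r = j on the left and r = k on the
   right.  Two facts combine:
   - Exchangeability: an i.i.d. vector and its permutation by any s have the
     same law (they agree on measurable cylinders, which generate the product
     sigma-algebra), so E[F(Z)] = E[F(Z o s)] for measurable nonnegative F.
   - Deterministic symmetry: with s the transposition of j and k, the
     threshold is unchanged (tau is permutation invariant) and, when T_j and T_k
     are both selected, so are the selected set, the denominator and the multiset
     of residuals defining Q_j; hence excess_weight (z o s) j j k equals
     excess_weight z j k k.
   Measurability of the integrand follows because it only depends on a finitely
   valued pattern (selected indices, residuals below R_r, sign of R_r) whose
   fibers are measurable; the order statistic is rewritten through counts. *)

Section cylinders.
Local Open Scope classical_set_scope.
Context {dT : measure_display} {T : measurableType dT} (N : nat).

Definition cylinder : set (set (N.-tuple T)) :=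
  [set C | exists2 B : 'I_N -> set T, (forall i, measurable (B i)) &
     C = [set t | forall i, B i (tnth t i)]].

Lemma cylinderI : setI_closed cylinder.
Proof.
move=> _ _ [B mB ->] [B' mB' ->]; exists (fun i => B i `&` B' i).
  by move=> i; apply: measurableI.
apply/seteqP; split=> t /=; first by move=> [H1 H2] i; split.
by move=> H; split=> i; case: (H i).
Qed.

Lemma cylinder_generates : @measurable _ (N.-tuple T) = <<s cylinder >>.
Proof.
apply/seteqP; split.
- apply: smallest_sub; first exact: smallest_sigma_algebra.
  move=> A; rewrite -bigcup_seq => -[i _ [B mB <-]].
  apply: sub_sigma_algebra; exists (fun i' => if i' == i then B else setT).
    by move=> i'; case: eqP.
  apply/seteqP; split => t /=; last by move/(_ i); rewrite eqxx.
  by move=> [_ Bt] i'; case: eqP => // ->.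
- apply: smallest_sub; first exact: sigma_algebra_measurable.
  move=> _ [B mB ->].
  have -> : [set t | forall i, B i (tnth t i)] =
      \bigcap_(i in [set: 'I_N]) ((tnth (T:=T))^~ i @^-1` B i).
    by apply/seteqP; split=> t /= H i; [move=> _ |]; apply: H.
  apply: fin_bigcap_measurable; first exact: finite_finset.
  by move=> i _; rewrite -[X in measurable X]setTI; apply: measurable_tnth.
Qed.
End cylinders.

Section exchangeability.
Local Open Scope classical_set_scope.
Context {dO : measure_display} {Omega : measurableType dO} {R : realType}
  {dT : measure_display} {T : measurableType dT} (N : nat)
  (P : probability Omega R) (Z : 'I_N -> Omega -> T).
Hypothesis iidZ : iid_family P Z.

Definition perm_sample (s : 'S_N) (w : Omega) : N.-tuple T :=
  [tuple Z (s i) w | i < N].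

Lemma measurable_perm_sample s : measurable_fun [set: Omega] (perm_sample s).
Proof.
apply/measurable_fun_tnthP => i.
rewrite (_ : _ \o _ = Z (s i)); first by case: iidZ.
by apply/funext => w /=; rewrite tnth_mktuple.
Qed.

Definition perm_sample_mfun s : {mfun Omega >-> N.-tuple T} :=
  mfun_Sub (mem_set (measurable_perm_sample s)).

Lemma perm_sample_cylinder s (B : 'I_N -> set T) : (forall i, measurable (B i)) ->
  P (perm_sample s @^-1` [set t | forall i, B i (tnth t i)]) =
  (\prod_(i < N) P (Z i @^-1` B i))%E.
Proof.
move=> mB; case: iidZ => _ [ident indep].
have -> : perm_sample s @^-1` [set t | forall i, B i (tnth t i)] =
    \bigcap_i (Z i @^-1` B (s^-1 i)%g).
  apply/seteqP; split => w /=.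
    by move=> H i _; have := H (s^-1 i)%g; rewrite tnth_mktuple permKV.
  by move=> H i; rewrite tnth_mktuple; have := H (s i) I; rewrite permK.
rewrite indep; last by move=> i; apply: mB.
rewrite (reindex_inj (@perm_inj _ s)) /=.
by apply: eq_bigr => i _; rewrite permK (ident _ i) //; apply: mB.
Qed.

Lemma perm_sample_law (s : 'S_N) (A : set (N.-tuple T)) : measurable A ->
  distribution P (perm_sample_mfun 1%g) A = distribution P (perm_sample_mfun s) A.
Proof.
apply: (measure_unique (@cylinder _ T N) (fun=> setT) _ _ _ _
  (distribution P (perm_sample_mfun 1%g)) (distribution P (perm_sample_mfun s))).
- exact: cylinder_generates.
- exact: cylinderI.
- by move=> _; exists (fun=> setT) => //; apply/seteqP; split.
- by rewrite bigcup_const.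
- move=> _ [B mB ->].
  exact: etrans (perm_sample_cylinder 1 mB) (esym (perm_sample_cylinder s mB)).
- by move=> _; apply: le_lt_trans (probability_le1 _ measurableT) (ltry 1).
Qed.

Lemma integral_perm_sample (s : 'S_N) (F : N.-tuple T -> R) :
  measurable_fun [set: N.-tuple T] F -> (forall t, 0 <= F t) ->
  (\int[P]_w (F (perm_sample 1%g w))%:E = \int[P]_w (F (perm_sample s w))%:E)%E.
Proof.
move=> mF F0.
have mFE : measurable_fun [set: N.-tuple T] (fun t => (F t)%:E).
  exact/measurable_EFinP.
have FE0 t : (0 <= (F t)%:E)%E by rewrite lee_fin.
rewrite -!(ge0_integral_distribution (perm_sample_mfun _) mFE FE0).
by apply: eq_measure_integral => A mA _; apply: perm_sample_law.
Qed.
End exchangeability.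

Lemma kth_smallest_perm (R : realType) k (s1 s2 : seq R) :
  perm_eq s1 s2 -> kth_smallest k s1 = kth_smallest k s2.
Proof. by move/perm_sort_leP; rewrite /kth_smallest => ->. Qed.

Lemma sorted_nth_lt (R : realDomainType) (s : seq R) (x : R) i :
  sorted <=%R s -> (i < size s)%N ->
  (nth 0 s i < x) = (i < count (fun y => (y < x)%R) s)%N.
Proof.
elim: s i => [|y s IH] i //= sorted_ys i_lt.
have sorted_s : sorted <=%R s := path_sorted sorted_ys.
have y_min : all (fun z => y <= z) s by apply: (order_path_min (@le_trans _ R)).
have none_below : ~~ (y < x) -> count (fun z => z < x) s = 0%N.
  rewrite -leNgt => xy; apply/eqP; rewrite -leqn0 leqNgt -has_count.
  apply/hasPn => z zs; rewrite -leNgt; apply: le_trans xy _.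
  by move/allP: y_min; apply.
case: i i_lt => [|i] i_lt /=.
  by case: (boolP (y < x)) => yx //=; rewrite none_below.
rewrite IH //; case: (boolP (y < x)) => yx /=; first by rewrite add1n ltnS.
by rewrite none_below // add0n ltn0; apply/negbTE; rewrite -leNgt.
Qed.

(* The k-th smallest value is below x iff at least k values are; when k
   exceeds the length, kth_smallest falls back to the default 0. *)
Lemma kth_smallest_lt (R : realType) k (s : seq R) x :
  (kth_smallest k s < x) =
  if (k.-1 < size s)%N then (k.-1 < count (fun y => (y < x)%R) s)%N else 0 < x.
Proof.
rewrite /kth_smallest; case: ifP => k_lt.
  rewrite sorted_nth_lt ?size_sort ?sort_sorted //; last exact: le_total.
  by have /seq.permP -> : perm_eq (sort <=%R s) s by rewrite perm_sort.
by rewrite nth_default // size_sort leqNgt k_lt.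
Qed.

Lemma count_enum_set (I : finType) (A L : {set I}) :
  count (mem L) (enum A) = #|A :&: L|.
Proof.
rewrite -sum1_count big_enum_cond /= sum1dep_card.
by congr #|_|; apply/setP => i; rewrite !inE.
Qed.

Lemma perm_eq_map_stable (I : finType) (T : eqType) (f : I -> T) (s : {perm I})
    (A : {set I}) :
  (forall i, i \in A -> s i \in A) ->
  perm_eq [seq f (s i) | i <- enum A] [seq f i | i <- enum A].
Proof.
move=> sA; rewrite (map_comp f s); apply: perm_map.
have uniq_sA : uniq [seq s i | i <- enum A].
  by rewrite map_inj_uniq ?enum_uniq //; apply: perm_inj.
have sub_sA : {subset [seq s i | i <- enum A] <= enum A}.
  by move=> _ /mapP[i iA ->]; rewrite mem_enum; apply: sA; rewrite -mem_enum.
have size_sA : (size (enum A) <= size [seq s i | i <- enum A])%N by rewrite size_map.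
have [_ eq_sA] := uniq_min_size uniq_sA sub_sA size_sA.
exact: uniq_perm uniq_sA (enum_uniq _) eq_sA.
Qed.

Section finite_valued.
Local Open Scope classical_set_scope.
Context {dW : measure_display} (W : measurableType dW).

Definition measurable_fibers (F : finType) (V : W -> F) : Prop :=
  forall v, measurable (V @^-1` [set v]).

(* Any real function of such a map is measurable: each preimage is a finite
   union of fibers. *)
Lemma measurable_fun_fibers (F : finType) (V : W -> F) (R : realType) (Psi : F -> R) :
  measurable_fibers V -> measurable_fun [set: W] (Psi \o V).
Proof.
move=> mV _ Y _; rewrite setTI.
have -> : (Psi \o V) @^-1` Y = \bigcup_(v in [set v | Y (Psi v)]) (V @^-1` [set v]).
  apply/seteqP; split => [t Yt | t [v Yv Vt]]; first by exists (V t).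
  by rewrite /= Vt.
by apply: fin_bigcup_measurable => //; exact: finite_finset.
Qed.

Lemma measurable_fibers_bool (b : W -> bool) :
  measurable_fun [set: W] b -> measurable_fibers b.
Proof. by move=> mb v; rewrite -[X in measurable X]setTI; apply: mb. Qed.

Lemma measurable_fibers_set (I : finType) (b : I -> W -> bool) :
  (forall i, measurable_fun [set: W] (b i)) ->
  measurable_fibers (fun t => [set i | b i t]%SET).
Proof.
move=> mb A.
have -> : (fun t => [set i | b i t]%SET) @^-1` [set A] =
    \bigcap_(i in [set: I]) (b i @^-1` [set i \in A]).
  apply/seteqP; split => [t /= <- i _|t /= bA]; first by rewrite inE.
  by apply/setP => i; rewrite inE; apply: bA.
apply: fin_bigcap_measurable; first exact: finite_finset.
by move=> i _; apply: measurable_fibers_bool.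
Qed.

Lemma measurable_fibers_pair (F1 F2 : finType) (V1 : W -> F1) (V2 : W -> F2) :
  measurable_fibers V1 -> measurable_fibers V2 ->
  measurable_fibers (fun t => (V1 t, V2 t)).
Proof.
move=> mV1 mV2 [v1 v2].
have -> : (fun t => (V1 t, V2 t)) @^-1` [set (v1, v2)] =
    V1 @^-1` [set v1] `&` V2 @^-1` [set v2].
  by apply/seteqP; split => t /= [-> ->].
exact: measurableI.
Qed.
End finite_valued.

Section conformal_weight.
Context (R : realType) (d n m : nat) (alpha : R) (muhat g : d.-tuple R -> R)
  (tau : (n + m).-tuple R -> R).
Local Notation N := (n + m).
Implicit Types (z : 'I_N -> d.-tuple R * R) (i j k r : 'I_N).

Definition score z i : R := g (z i).1.
Definition residual z i : R := `|(z i).2 - muhat (z i).1|.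
Definition threshold z : R := tau [tuple score z i | i < N].
Definition selected z i : bool := score z i <= threshold z.
Definition calib_selected z : {set 'I_N} :=
  [set i : 'I_N | (i < n)%N && selected z i].

Definition quantile z j : R :=
  kth_smallest `|Num.ceil ((1 - alpha) * (#|calib_selected z|.+1)%:R)|%N
    [seq residual z i | i <- enum (calib_selected z :|: [set j])].

Definition denom z j : R :=
  \sum_(i < N | (i < n)%N || (i == j)) (if selected z i then 1 else 0).

Definition excess_weight z j r k : R :=
  if [&& quantile z j < residual z r, selected z k & selected z j]
  then (denom z j)^-1 else 0.

(* Nonnegativity, needed to integrate without integrability assumptions. *)
Lemma excess_weight_ge0 z j r k : 0 <= excess_weight z j r k.
Proof.
rewrite /excess_weight; case: ifP => // _; rewrite invr_ge0.
by apply: sumr_ge0 => i _; case: ifP.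
Qed.

Section swap.
Hypothesis tau_sym : perm_invariant tau.
Variables (j k : 'I_N).
Let swap z : 'I_N -> d.-tuple R * R := fun i => z (tperm j k i).

Lemma threshold_swap z : threshold (swap z) = threshold z.
Proof.
rewrite /threshold -[RHS](tau_sym (tperm j k)); congr tau.
by apply: eq_mktuple => i; rewrite tnth_mktuple.
Qed.

Lemma selected_swap z i : selected (swap z) i = selected z (tperm j k i).
Proof. by rewrite /selected threshold_swap. Qed.

Lemma selected_swap_id z : selected z j -> selected z k ->
  selected (swap z) =1 selected z.
Proof.
by move=> zj zk i; rewrite selected_swap; case: tpermP => [->|->|//]; rewrite zj zk.
Qed.

Lemma excess_weight_swap z : (k < n)%N ->
  excess_weight (swap z) j j k = excess_weight z j k k.
Proof.
move=> k_calib; rewrite /excess_weight !selected_swap tpermL tpermR.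
case: (boolP (selected z j)) => zj; last by rewrite !andbF.
case: (boolP (selected z k)) => zk; last by rewrite !andbF.
have sel := selected_swap_id zj zk.
have calib_eq : calib_selected (swap z) = calib_selected z.
  by apply/setP => i; rewrite !inE sel.
have denom_eq : denom (swap z) j = denom z j.
  by apply: eq_bigr => i _; rewrite sel.
have quantile_eq : quantile (swap z) j = quantile z j.
  rewrite /quantile calib_eq; apply: kth_smallest_perm.
  apply: (perm_eq_map_stable (residual z) (s := tperm j k)) => i.
  by rewrite !inE; case: tpermP => [->|->|//] _; rewrite ?eqxx ?orbT ?zk ?k_calib.
by rewrite quantile_eq denom_eq /residual /swap tpermL.
Qed.
End swap.

(* The integrand only depends on which points are selected, which residuals lie
   below R_r, and the sign of R_r: this finite "pattern" determines it. *)
Definition excess_pattern j k (S L : {set 'I_N}) (pos : bool) : R :=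
  let C := [set i in S | (i < n)%N] in
  let K := (`|Num.ceil ((1 - alpha) * (#|C|.+1)%:R)|%N).-1 in
  let exceeds := if (K < #|C|.+1)%N then (K < #|(C :|: [set j]) :&: L|)%N else pos in
  if [&& exceeds, k \in S & j \in S]
  then (#|[set i in S | (i < n)%N || (i == j)]|%:R)^-1 else 0.

Lemma sum_indicator (P b : pred 'I_N) :
  \sum_(i | P i) (if b i then 1 else 0 : R) = #|[set i | P i && b i]|%:R.
Proof.
rewrite -sum1dep_card natr_sum big_mkcondr /=.
by apply: eq_bigr => i _; case: (b i).
Qed.

(* The pattern determines the integrand; the order statistic is replaced by the
   counting characterization kth_smallest_lt (this needs j outside calibration). *)
Lemma excess_weight_pattern z j r k : (n <= j)%N ->
  excess_weight z j r k = excess_pattern j k [set i | selected z i]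
    [set i | residual z i < residual z r] (0 < residual z r).
Proof.
move=> j_test; set S := [set i | selected z i]; set L := [set i | _ < _].
have calib_eq : calib_selected z = [set i in S | (i < n)%N].
  by apply/setP => i; rewrite !inE andbC.
have j_notin : j \notin calib_selected z by rewrite inE negb_and -leqNgt j_test.
have card_A : #|calib_selected z :|: [set j]| = #|calib_selected z|.+1.
  by rewrite finset.setUC cardsU1 j_notin.
rewrite /excess_weight /excess_pattern /quantile kth_smallest_lt size_map -cardE.
rewrite card_A count_map.
rewrite (eq_count (a2 := mem L)); last by move=> i; rewrite !inE.
rewrite count_enum_set calib_eq /denom sum_indicator !inE.
suff -> : [set i in S | (i < n)%N || (i == j)] =
    [set i : 'I_N | ((i < n)%N || (i == j)) && selected z i] by [].
by apply/setP => i; rewrite !inE andbC.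
Qed.

Section measurability.
Local Open Scope classical_set_scope.
Local Notation W := (N.-tuple (d.-tuple R * R)).
Hypotheses (mmuhat : measurable_fun [set: d.-tuple R] muhat)
  (mg : measurable_fun [set: d.-tuple R] g)
  (mtau : measurable_fun [set: N.-tuple R] tau).

Lemma measurable_score i : measurable_fun [set: W] (fun t => score (tnth t) i).
Proof.
apply: (measurableT_comp mg); apply: (measurableT_comp measurable_fst).
exact: measurable_tnth.
Qed.

Lemma measurable_residual i :
  measurable_fun [set: W] (fun t => residual (tnth t) i).
Proof.
apply: measurableT_comp; first exact: normr_measurable.
apply: measurable_funB.
  by apply: (measurableT_comp measurable_snd); exact: measurable_tnth.
apply: (measurableT_comp mmuhat); apply: (measurableT_comp measurable_fst).
exact: measurable_tnth.
Qed.

Lemma measurable_selected i :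
  measurable_fun [set: W] (fun t => selected (tnth t) i).
Proof.
apply: measurable_fun_ler; first exact: measurable_score.
apply: (measurableT_comp mtau); apply/measurable_fun_tnthP => i'.
rewrite (_ : _ \o _ = fun t => score (tnth t) i'); first exact: measurable_score.
by apply/funext => t /=; rewrite tnth_mktuple.
Qed.

Lemma measurable_excess_weight j r k : (n <= j)%N ->
  measurable_fun [set: W] (fun t => excess_weight (tnth t) j r k).
Proof.
move=> j_test.
pose pattern (t : W) := ([set i | selected (tnth t) i]%SET,
  [set i | residual (tnth t) i < residual (tnth t) r]%SET, 0 < residual (tnth t) r).
have -> : (fun t => excess_weight (tnth t) j r k) =
    (fun v => excess_pattern j k v.1.1 v.1.2 v.2) \o pattern.
  by apply/funext => t /=; rewrite excess_weight_pattern.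
apply: measurable_fun_fibers; apply: measurable_fibers_pair.
  apply: measurable_fibers_pair; apply: measurable_fibers_set => i.
    exact: measurable_selected.
  by apply: measurable_fun_ltr; exact: measurable_residual.
apply: measurable_fibers_bool; apply: measurable_fun_ltr.
  exact: measurable_cst.
exact: measurable_residual.
Qed.
End measurability.
End conformal_weight.

Unset Implicit Arguments.
Theorem lemma8 (R : realType) (d n m : nat) (alpha : R)
  (dO : measure_display) (Omega : measurableType dO) (P : probability Omega R)
  (X : 'I_(n + m) -> Omega -> d.-tuple R) (Y : 'I_(n + m) -> Omega -> R)
  (muhat g : d.-tuple R -> R) (tau : (n + m).-tuple R -> R) :
  measurable_fun [set: d.-tuple R] muhat ->
  measurable_fun [set: d.-tuple R] g ->
  measurable_fun [set: (n + m).-tuple R] tau ->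
  perm_invariant tau ->
  0 < alpha < 1 ->
  iid_family P (fun i w => (X i w, Y i w)) ->
  let T := fun i w => g (X i w) in
  let Res := fun i w => (`|Y i w - muhat (X i w)| : R) in
  let tauhat := fun w => tau [tuple T i w | i < n + m] in
  let Shat := fun w => [set i : 'I_(n + m) | (i < n)%N && (T i w <= tauhat w)] in
  forall j k : 'I_(n + m), (n <= j)%N -> (k < n)%N ->
  let Q := fun w => kth_smallest
      `|Num.ceil ((1 - alpha) * (#|Shat w|.+1)%:R)|%N
      [seq Res i w | i <- enum (Shat w :|: [set j])] in
  let den := fun w => \sum_(i < n + m | (i < n)%N || (i == j)) (if T i w <= tauhat w then 1 else 0 : R) in
  (\int[P]_w (if [&& Q w < Res j w, T k w <= tauhat w & T j w <= tauhat w]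
              then (den w)^-1 else 0)%:E =
   \int[P]_w (if [&& Q w < Res k w, T k w <= tauhat w & T j w <= tauhat w]
              then (den w)^-1 else 0)%:E)%E.
Proof.
move=> mmuhat mg mtau tau_sym _ iid T Res tauhat Shat j k j_test k_calib Q den.
pose Z i w := (X i w, Y i w).
pose F t := excess_weight alpha muhat g tau (tnth t) j j k.
have tnth_sample s w : tnth (perm_sample Z s w) = fun i => Z (s i) w.
  by apply/funext => i; rewrite tnth_mktuple.
(* Both sides are expectations of excess_weight; exchange j and k in the sample. *)
change (\int[P]_w (excess_weight alpha muhat g tau (Z^~ w) j j k)%:E =
  \int[P]_w (excess_weight alpha muhat g tau (Z^~ w) j k k)%:E)%E.
transitivity (\int[P]_w (F (perm_sample Z 1%g w))%:E)%E.
  apply: eq_integral => w _; rewrite /F tnth_sample.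
  by congr (excess_weight _ _ _ _ _ _ _ _)%:E; apply/funext => i; rewrite perm1.
rewrite (integral_perm_sample iid (tperm j k)); last 2 first.
- exact: measurable_excess_weight.
- by move=> t; apply: excess_weight_ge0.
apply: eq_integral => w _.
by rewrite /F tnth_sample (excess_weight_swap alpha muhat g tau_sym j (Z^~ w) k_calib).
Qed.
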